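(* Let $C\in(\frac{\beta u_0-1}{r},\frac{\beta u_0}{r})$ with $C>\xi_2(\beta)$. Then there exists a unique $z_g^C\in(d,\infty)$ such that the function $g_C=H_{C,z_g^C}\mathbf 1_{[d,z_g^C]}+K_{z_g^C}\mathbf 1_{(z_g^C,\infty)}$ is bounded and solves Problem 2 with $g_C(d)=C$. Moreover, the map $C\mapsto z_g^C$ is increasing and $z_g^{\xi_2(\beta)}=d$, where for $C=\xi_2(\beta)$ the quantity $z_g^C$ denotes the point $t\in[d,\infty)$ with $H_{C,t}(t)=K_t(t)$.
   Context: Fix $\mu\in\mathbb R$, $\sigma>0$, $u_0>0$, $r>0$, $\beta>0$, $d>0$. For $u\in[0,u_0]$ let $\theta_1(u)=\frac{\sqrt{(\mu-u)^2+2r\sigma^2}+(\mu-u)}{\sigma^2}$, $\theta_2(u)=\frac{\sqrt{(\mu-u)^2+2r\sigma^2}-(\mu-u)}{\sigma^2}$; write $\alpha_i=\theta_i(u_0)$, $\gamma_i=\theta_i(0)$ ($i=1,2$). Let $\xi_2(\beta)=\frac{\beta u_0-1}{r}+\frac{\beta}{\alpha_2}$. For $t\ge d$ and real $C$ define for $z\ge d$ $$H_{C,t}(z)=-\frac1r+\frac{C+\frac1r-\frac{\beta}{\gamma_2}e^{-\gamma_2(d-t)}}{e^{\gamma_1d}+\frac{\gamma_1}{\gamma_2}e^{(\gamma_1+\gamma_2)t}e^{-\gamma_2d}}\Big(e^{\gamma_1z}+\frac{\gamma_1}{\gamma_2}e^{(\gamma_1+\gamma_2)t}e^{-\gamma_2z}\Big)+\frac{\beta}{\gamma_2}e^{-\gamma_2(z-t)},$$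 $$K_t(z)=\frac{\beta u_0-1}{r}+\frac{\beta}{\alpha_2}e^{-\alpha_2(z-t)}.$$ Problem 2: a bounded twice continuously differentiable function $g$ on $[d,\infty)$ satisfying $-rg(z)-\mu g'(z)+\frac{\sigma^2}{2}g''(z)+\sup_{u\in[0,u_0]}\{(\beta+g'(z))u\}=1$ for $z\ge d$ (right derivatives at $d$). *)

From Stdlib Require Import Reals Lra.
From Coquelicot Require Import Coquelicot.
Open Scope R_scope.

Definition theta1 (mu sigma r u : R) : R :=
  (sqrt ((mu - u)^2 + 2 * r * sigma^2) + (mu - u)) / sigma^2.
Definition theta2 (mu sigma r u : R) : R :=
  (sqrt ((mu - u)^2 + 2 * r * sigma^2) - (mu - u)) / sigma^2.

Definition xi2 (mu sigma u0 r beta : R) : R :=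
  (beta * u0 - 1) / r + beta / theta2 mu sigma r u0.

Definition Hfun (mu sigma r beta d C t z : R) : R :=
  let g1 := theta1 mu sigma r 0 in
  let g2 := theta2 mu sigma r 0 in
  - / r
  + (C + / r - beta / g2 * exp (- g2 * (d - t)))
    / (exp (g1 * d) + g1 / g2 * exp ((g1 + g2) * t) * exp (- g2 * d))
    * (exp (g1 * z) + g1 / g2 * exp ((g1 + g2) * t) * exp (- g2 * z))
  + beta / g2 * exp (- g2 * (z - t)).

Definition Kfun (mu sigma u0 r beta t z : R) : R :=
  (beta * u0 - 1) / r
  + beta / theta2 mu sigma r u0 * exp (- theta2 mu sigma r u0 * (z - t)).

Definition gC (mu sigma u0 r beta d C t z : R) : R :=
  if Rle_dec z t then Hfun mu sigma r beta d C t z else Kfun mu sigma u0 r beta t z.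

(* f' is the derivative of f relative to [d, oo) at every z >= d
   (ordinary derivative for z > d, right derivative at z = d). *)
Definition is_deriv_half (d : R) (f f' : R -> R) : Prop :=
  forall z, d <= z ->
    filterlim (fun h => (f (z + h) - f z) / h)
      (within (fun h => h <> 0 /\ d <= z + h) (locally 0))
      (locally (f' z)).

Definition cont_half (d : R) (f : R -> R) : Prop :=
  forall z, d <= z -> filterlim f (within (fun x => d <= x) (locally z)) (locally (f z)).

Definition sup_ctrl (u0 beta p : R) : R :=
  real (Lub_Rbar (fun y => exists u, 0 <= u <= u0 /\ y = (beta + p) * u)).

Definition Problem2 (mu sigma u0 r beta d : R) (g : R -> R) : Prop :=
  (exists M, forall z, d <= z -> Rabs (g z) <= M) /\
  exists g1 g2 : R -> R,
    is_deriv_half d g g1 /\ is_deriv_half d g1 g2 /\ cont_half d g2 /\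
    forall z, d <= z ->
      - r * g z - mu * g1 z + sigma^2 / 2 * g2 z + sup_ctrl u0 beta (g1 z) = 1.

(* Write g1 = theta_1(0), g2 = theta_2(0), a1 = theta_1(u0), a2 = theta_2(u0).  Both
   H_{C,t} and K_t are exponential sums c0 + A e^{a(z-t)} + B e^{b(z-t)} whose exponents are
   roots of the characteristic polynomials of the HJB equation with control 0, resp. u0, and
   H'_{C,t}(t) = K'_t(t) = -beta for every t.  A solution of Problem 2 is continuous at the
   junction t, so the gap H_{C,t}(t) - K_t(t) = (1 + g1/g2) G(t - d) - (xi_2 + 1/r - beta/g2)
   must vanish, where G(s) = (C + 1/r - (beta/g2) e^{g2 s}) / (e^{-g1 s} + (g1/g2) e^{g2 s});
   conversely, when it vanishes the two ODEs force H'' = K'' at t, so g_C is C^2.  The gap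
   equals C - xi_2 at t = d, is strictly decreasing in t and increasing in C, and becomes
   negative since G(s) -> -beta/g1 while xi_2 + 1/r - beta/g2 + beta/g1 = beta/a1 > 0.  At a
   root the same positivity gives beta + H' <= 0 on [d, t], and beta + K' >= 0 beyond t, so the
   supremum in the HJB equation is attained at u = 0, resp. u = u0. *)

From Stdlib Require Import Reals Lra Psatz.
From Coquelicot Require Import Coquelicot.
Open Scope R_scope.

Lemma exp_le x y : x <= y -> exp x <= exp y.
Proof. intros [Hxy | ->]; [left; apply exp_increasing; exact Hxy | right; reflexivity]. Qed.

Lemma is_deriv_half_of_is_derive d (f f' : R -> R) :
  (forall x, is_derive f x (f' x)) -> is_deriv_half d f f'.
Proof.
intros Hf z _. apply filterlim_locally. intros eps.
destruct (proj1 (is_derive_Reals f z (f' z)) (Hf z) eps (cond_pos eps)) as [del Hdel].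
exists del. intros h Hh [Hh0 _]. apply Hdel; [exact Hh0 |].
change (Rabs (h - 0) < del) in Hh. rewrite Rminus_0_r in Hh. exact Hh.
Qed.

Lemma cont_half_of_continuous d (f : R -> R) :
  (forall x, continuous f x) -> cont_half d f.
Proof.
intros Hf z _. exact (filterlim_filter_le_1 _ (filter_le_within _) (Hf z)).
Qed.

Lemma is_deriv_half_right_lim d f f' z : d <= z -> is_deriv_half d f f' ->
  filterlim (fun h => f (z + h)) (at_right 0) (locally (f z)).
Proof.
intros Hz Hf.
(* [f (z + h) = f z + h * q h], where the difference quotient [q] converges. *)
assert (Hq : filterlim (fun h => (f (z + h) - f z) / h) (at_right 0) (locally (f' z))).
{ refine (filterlim_filter_le_1 _ _ (Hf z Hz)). intros P. unfold at_right, within. apply filter_imp.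
  intros h HP Hh. apply HP. split; lra. }
assert (Hh : filterlim (fun h : R => h) (at_right 0) (locally 0)).
{ apply (filterlim_filter_le_1 _ (filter_le_within _) (filterlim_id _ _)). }
assert (Hsum := filterlim_comp_2 _ _ _ (filterlim_const (f z))
  (filterlim_comp_2 _ _ _ Hh Hq (filterlim_mult 0 (f' z)))
  (filterlim_plus (f z) (mult 0 (f' z)))).
unfold mult, plus in Hsum; simpl in Hsum. rewrite Rmult_0_l, Rplus_0_r in Hsum.
refine (filterlim_within_ext _ _ _ _ Hsum).
intros h Hh0. simpl in Hh0. field. lra.
Qed.

Lemma is_deriv_half_eq_right_cont d f f' g z : d <= z -> is_deriv_half d f f' ->
  continuous g z -> (forall h, 0 < h -> f (z + h) = g (z + h)) -> f z = g z.
Proof.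
intros Hz Hf Hg Hfg.
assert (Hgz : continuous (fun h => g (z + h)) 0).
{ apply (continuous_comp (fun h => z + h) g).
  - apply (continuous_plus (fun _ => z) (fun h => h));
      [apply continuous_const | apply continuous_id].
  - rewrite Rplus_0_r. exact Hg. }
unfold continuous in Hgz. rewrite Rplus_0_r in Hgz.
apply (filterlim_locally_unique (F := at_right 0) (fun h => f (z + h))).
- apply is_deriv_half_right_lim with d f'; assumption.
- refine (filterlim_within_ext _ (fun h => g (z + h)) _ _ _).
  { intros h Hh. symmetry. apply Hfg. exact Hh. }
  apply (filterlim_filter_le_1 _ (filter_le_within _) Hgz).
Qed.

Lemma extension_cont_locally_l {U : UniformSpace} (f g : R -> U) a x : x < a ->
  locally x (fun y => f y = extension_cont f g a y).
Proof.
intros Hx. apply (filter_imp (fun y => y < a)); [|exact (open_lt a x Hx)].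
intros y Hy. unfold extension_cont. destruct (Rle_dec y a); [reflexivity | lra].
Qed.

Lemma extension_cont_locally_r {U : UniformSpace} (f g : R -> U) a x : a < x ->
  locally x (fun y => g y = extension_cont f g a y).
Proof.
intros Hx. apply (filter_imp (fun y => a < y)); [|exact (open_gt a x Hx)].
intros y Hy. unfold extension_cont. destruct (Rle_dec y a); [lra | reflexivity].
Qed.

Lemma continuous_extension_cont (f g : R -> R) a :
  (forall x, continuous f x) -> (forall x, continuous g x) -> f a = g a ->
  forall x, continuous (extension_cont f g a) x.
Proof.
intros Hf Hg Ha x. destruct (Rtotal_order x a) as [Hx | [-> | Hx]].
- unfold continuous. replace (extension_cont f g a x) with (f x)
    by (unfold extension_cont; destruct (Rle_dec x a); [reflexivity | lra]).
  exact (filterlim_ext_loc _ _ (extension_cont_locally_l f g a x Hx) (Hf x)).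
- apply extension_cont_continuous; auto.
- unfold continuous. replace (extension_cont f g a x) with (g x)
    by (unfold extension_cont; destruct (Rle_dec x a); [lra | reflexivity]).
  exact (filterlim_ext_loc _ _ (extension_cont_locally_r f g a x Hx) (Hg x)).
Qed.

Lemma is_derive_extension_cont (f g f' g' : R -> R) a :
  (forall x, is_derive f x (f' x)) -> (forall x, is_derive g x (g' x)) ->
  f a = g a -> f' a = g' a ->
  forall x, is_derive (extension_cont f g a) x (extension_cont f' g' a x).
Proof.
intros Hf Hg Ha Ha' x. unfold extension_cont at 2.
destruct (Rle_dec x a) as [Hx | Hx]; [destruct Hx as [Hx | ->] |].
- exact (is_derive_ext_loc _ _ _ _ (extension_cont_locally_l f g a x Hx) (Hf x)).
- apply extension_cont_is_derive; [exact (Hf a) | rewrite Ha'; exact (Hg a) | exact Ha].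
- apply Rnot_le_lt in Hx.
  exact (is_derive_ext_loc _ _ _ _ (extension_cont_locally_r f g a x Hx) (Hg x)).
Qed.

Lemma sup_ctrl_eq u0 beta p : 0 <= u0 -> sup_ctrl u0 beta p = Rmax 0 ((beta + p) * u0).
Proof.
intros Hu. unfold sup_ctrl.
rewrite (is_lub_Rbar_unique _ (Finite (Rmax 0 ((beta + p) * u0)))); [reflexivity | split].
- intros y [u [Hu' ->]]. simpl. destruct (Rle_dec 0 (beta + p)).
  + eapply Rle_trans; [| apply Rmax_r]. nra.
  + eapply Rle_trans; [| apply Rmax_l]. nra.
- intros b Hb. unfold Rmax. destruct Rle_dec; apply Hb.
  + exists u0. split; [lra | reflexivity].
  + exists 0. split; [lra | ring].
Qed.

Lemma Problem2_extension_cont mu sigma u0 r beta d (H H1 H2 K K1 K2 : R -> R) t :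
  (forall z, is_derive H z (H1 z)) -> (forall z, is_derive H1 z (H2 z)) ->
  (forall z, continuous H2 z) ->
  (forall z, is_derive K z (K1 z)) -> (forall z, is_derive K1 z (K2 z)) ->
  (forall z, continuous K2 z) ->
  H t = K t -> H1 t = K1 t -> H2 t = K2 t ->
  (forall z, d <= z <= t ->
     - r * H z - mu * H1 z + sigma ^ 2 / 2 * H2 z + sup_ctrl u0 beta (H1 z) = 1) ->
  (forall z, t < z ->
     - r * K z - mu * K1 z + sigma ^ 2 / 2 * K2 z + sup_ctrl u0 beta (K1 z) = 1) ->
  (exists M, forall z, d <= z -> Rabs (extension_cont H K t z) <= M) ->
  Problem2 mu sigma u0 r beta d (extension_cont H K t).
Proof.
intros dH dH1 cH2 dK dK1 cK2 E0 E1 E2 eqH eqK Hbd. split; [exact Hbd |].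
exists (extension_cont H1 K1 t), (extension_cont H2 K2 t). split; [| split; [| split]].
- apply is_deriv_half_of_is_derive, is_derive_extension_cont; assumption.
- apply is_deriv_half_of_is_derive, is_derive_extension_cont; assumption.
- apply cont_half_of_continuous, continuous_extension_cont; assumption.
- intros z Hz. unfold extension_cont.
  destruct (Rle_dec z t); [apply eqH | apply eqK]; lra.
Qed.

Definition expsum (c0 A a B b t z : R) : R :=
  c0 + A * exp (a * (z - t)) + B * exp (b * (z - t)).

Lemma expsum_center c0 A a B b t : expsum c0 A a B b t t = c0 + A + B.
Proof. unfold expsum. rewrite Rminus_diag, !Rmult_0_r, exp_0. ring. Qed.

Lemma is_derive_expsum c0 A a B b t z :
  is_derive (expsum c0 A a B b t) z (expsum 0 (A * a) a (B * b) b t z).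
Proof. unfold expsum. auto_derive; [exact I | unfold Rminus; ring]. Qed.

Lemma continuous_expsum c0 A a B b t z : continuous (expsum c0 A a B b t) z.
Proof.
apply (ex_derive_continuous (K := R_AbsRing) (V := R_NormedModule)).
eexists. apply is_derive_expsum.
Qed.

Lemma expsum_ode s m r c0 A a B b t z :
  s / 2 * a ^ 2 - m * a - r = 0 -> s / 2 * b ^ 2 - m * b - r = 0 ->
  - r * expsum c0 A a B b t z - m * expsum 0 (A * a) a (B * b) b t z
    + s / 2 * expsum 0 (A * a * a) a (B * b * b) b t z = - r * c0.
Proof.
intros Ha Hb. unfold expsum.
transitivity (- r * c0 + A * exp (a * (z - t)) * (s / 2 * a ^ 2 - m * a - r)
  + B * exp (b * (z - t)) * (s / 2 * b ^ 2 - m * b - r)); [ring |].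
rewrite Ha, Hb. ring.
Qed.

Lemma expsum_abs_le c0 A a B b t z :
  Rabs (expsum c0 A a B b t z)
  <= Rabs c0 + Rabs A * exp (a * (z - t)) + Rabs B * exp (b * (z - t)).
Proof.
unfold expsum. eapply Rle_trans; [apply Rabs_triang |].
rewrite !Rabs_mult, (Rabs_pos_eq (exp (b * (z - t)))) by (left; apply exp_pos).
apply Rplus_le_compat_r. eapply Rle_trans; [apply Rabs_triang |].
rewrite Rabs_mult, (Rabs_pos_eq (exp (a * (z - t)))) by (left; apply exp_pos). lra.
Qed.

Section Theta.
Variables (mu sigma r u : R).
Hypotheses (Hsigma : 0 < sigma) (Hr : 0 < r).

Let S := sqrt ((mu - u) ^ 2 + 2 * r * sigma ^ 2).

Let sigma2_pos : 0 < sigma ^ 2.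
Proof. apply pow_lt. exact Hsigma. Qed.

Let S_sqr : S * S = (mu - u) ^ 2 + 2 * r * sigma ^ 2.
Proof.
unfold S. apply sqrt_sqrt.
generalize (pow2_ge_0 (mu - u)) (Rmult_lt_0_compat _ _ Hr sigma2_pos). lra.
Qed.

Let S_gt : - S < mu - u < S.
Proof.
assert (0 <= S) by apply sqrt_pos. assert (HS := S_sqr).
assert (0 < 2 * r * sigma ^ 2) by (generalize (Rmult_lt_0_compat _ _ Hr sigma2_pos); lra).
split; nra.
Qed.

Lemma theta1_pos : 0 < theta1 mu sigma r u.
Proof.
unfold theta1. fold S. apply Rdiv_lt_0_compat; [| exact sigma2_pos]. generalize S_gt. lra.
Qed.

Lemma theta2_pos : 0 < theta2 mu sigma r u.
Proof.
unfold theta2. fold S. apply Rdiv_lt_0_compat; [| exact sigma2_pos]. generalize S_gt. lra.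
Qed.

Lemma theta1_char :
  sigma ^ 2 / 2 * theta1 mu sigma r u ^ 2 - (mu - u) * theta1 mu sigma r u - r = 0.
Proof.
unfold theta1. fold S.
transitivity ((S * S - (mu - u) ^ 2 - 2 * r * sigma ^ 2) / (2 * sigma ^ 2)); [field; lra |].
rewrite S_sqr. field. lra.
Qed.

Lemma theta2_char :
  sigma ^ 2 / 2 * (- theta2 mu sigma r u) ^ 2 - (mu - u) * (- theta2 mu sigma r u) - r = 0.
Proof.
unfold theta2. fold S.
transitivity ((S * S - (mu - u) ^ 2 - 2 * r * sigma ^ 2) / (2 * sigma ^ 2)); [field; lra |].
rewrite S_sqr. field. lra.
Qed.

Lemma inv_theta1_sub_inv_theta2 :
  / theta1 mu sigma r u - / theta2 mu sigma r u = - (mu - u) / r.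
Proof.
assert (H1 := theta1_pos). assert (H2 := theta2_pos).
assert (Hprod : theta1 mu sigma r u * theta2 mu sigma r u = 2 * r / sigma ^ 2).
{ unfold theta1, theta2. fold S.
  transitivity ((S * S - (mu - u) ^ 2) / (sigma ^ 2 * sigma ^ 2)); [field; lra |].
  rewrite S_sqr. field. lra. }
assert (Hdiff : theta1 mu sigma r u - theta2 mu sigma r u = 2 * (mu - u) / sigma ^ 2)
  by (unfold theta1, theta2; field; lra).
transitivity (- (theta1 mu sigma r u - theta2 mu sigma r u)
  / (theta1 mu sigma r u * theta2 mu sigma r u)); [field; lra |].
rewrite Hprod, Hdiff. field. lra.
Qed.

End Theta.

Definition fit_basis (g1 g2 w : R) : R := exp (- g1 * w) + g1 / g2 * exp (g2 * w).

Definition fit_coef (g1 g2 beta a s : R) : R :=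
  (a - beta / g2 * exp (g2 * s)) / fit_basis g1 g2 s.

Section FitCoef.
Variables (g1 g2 beta : R).
Hypotheses (Hg1 : 0 < g1) (Hg2 : 0 < g2) (Hbeta : 0 < beta).

Lemma fit_basis_pos w : 0 < fit_basis g1 g2 w.
Proof.
unfold fit_basis. generalize (exp_pos (- g1 * w)) (exp_pos (g2 * w)).
assert (0 < g1 / g2) by (apply Rdiv_lt_0_compat; assumption). nra.
Qed.

Lemma fit_basis_lt w1 w2 : 0 <= w1 < w2 -> fit_basis g1 g2 w1 < fit_basis g1 g2 w2.
Proof.
intros Hw. unfold fit_basis. set (D := w2 - w1).
replace (- g1 * w2) with (- g1 * w1 + - g1 * D) by (unfold D; ring).
replace (g2 * w2) with (g2 * w1 + g2 * D) by (unfold D; ring).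
rewrite !exp_plus.
set (Y := exp (- g1 * w1)). set (P := exp (g2 * w1)).
assert (HY : 0 < Y <= 1) by (split; [apply exp_pos | rewrite <- exp_0; apply exp_le; nra]).
assert (HP : 1 <= P) by (rewrite <- exp_0; apply exp_le; nra).
assert (Hdown : 0 <= 1 - exp (- g1 * D) <= g1 * D).
{ split; [rewrite <- exp_0 at 1; generalize (exp_le (- g1 * D) 0); unfold D in *; nra |].
  generalize (exp_ineq1_le (- g1 * D)). lra. }
assert (HD : 0 < g2 * D) by (apply Rmult_lt_0_compat; unfold D; lra).
assert (Hup : g2 * D < exp (g2 * D) - 1) by (generalize (exp_ineq1 (g2 * D)); lra).
assert (Hc : 0 < g1 / g2) by (apply Rdiv_lt_0_compat; assumption).
assert (HYd : Y * (1 - exp (- g1 * D)) <= g1 * D) by nra.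
assert (HPu : g1 / g2 * (g2 * D) < g1 / g2 * (P * (exp (g2 * D) - 1))).
{ apply Rmult_lt_compat_l; [exact Hc | nra]. }
replace (g1 / g2 * (g2 * D)) with (g1 * D) in HPu by (field; lra).
lra.
Qed.

Lemma fit_coef_add a s :
  fit_coef g1 g2 beta a s + beta / g1 = (a + beta / g1 * exp (- g1 * s)) / fit_basis g1 g2 s.
Proof.
unfold fit_coef, fit_basis. generalize (exp_pos (- g1 * s)) (exp_pos (g2 * s)). intros.
field. repeat split; try lra. apply Rgt_not_eq. nra.
Qed.

Lemma fit_coef_decreasing a s1 s2 : 0 <= a -> 0 <= s1 < s2 ->
  fit_coef g1 g2 beta a s2 < fit_coef g1 g2 beta a s1.
Proof.
intros Ha Hs.
(* After the shift the numerator is positive and nonincreasing, the denominator increasing. *)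
apply (Rplus_lt_reg_r (beta / g1)). rewrite !fit_coef_add.
assert (HB1 := fit_basis_pos s1). assert (HB12 := fit_basis_lt s1 s2 Hs).
assert (Hm : 0 < beta / g1) by (apply Rdiv_lt_0_compat; assumption).
assert (HN2 : 0 < a + beta / g1 * exp (- g1 * s2))
  by (generalize (exp_pos (- g1 * s2)); nra).
assert (HN : a + beta / g1 * exp (- g1 * s2) <= a + beta / g1 * exp (- g1 * s1)).
{ apply Rplus_le_compat_l, Rmult_le_compat_l; [lra | apply exp_le; nra]. }
apply Rle_lt_trans with ((a + beta / g1 * exp (- g1 * s1)) / fit_basis g1 g2 s2).
- apply Rmult_le_compat_r; [left; apply Rinv_0_lt_compat; lra | exact HN].
- apply Rmult_lt_compat_l; [lra | apply Rinv_lt_contravar; nra].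
Qed.

Lemma fit_coef_lt_compat a1 a2 s : a1 < a2 ->
  fit_coef g1 g2 beta a1 s < fit_coef g1 g2 beta a2 s.
Proof.
intros Ha. unfold fit_coef. apply Rmult_lt_compat_r; [| lra].
apply Rinv_0_lt_compat, fit_basis_pos.
Qed.

Lemma fit_coef_0 a : (1 + g1 / g2) * fit_coef g1 g2 beta a 0 = a - beta / g2.
Proof. unfold fit_coef, fit_basis. rewrite !Rmult_0_r, exp_0. field. lra. Qed.

Lemma continuous_fit_coef a s : continuous (fit_coef g1 g2 beta a) s.
Proof.
apply (ex_derive_continuous (K := R_AbsRing) (V := R_NormedModule)).
unfold fit_coef, fit_basis. auto_derive. repeat split.
apply Rgt_not_eq. apply (fit_basis_pos s).
Qed.

Lemma fit_coef_eventually_lt a y : 0 <= a -> - (beta / g1) < y ->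
  exists s, 0 < s /\ fit_coef g1 g2 beta a s < y.
Proof.
intros Ha Hy. set (m := beta / g1) in *. set (c := g1 / g2).
assert (Hm : 0 < m) by (apply Rdiv_lt_0_compat; assumption).
assert (Hc : 0 < c) by (apply Rdiv_lt_0_compat; assumption).
set (K := (a + m) / (c * (y + m))).
set (s := (Rabs K + 1) / g2).
assert (Hs : 0 < s) by (apply Rdiv_lt_0_compat; [generalize (Rabs_pos K); lra | exact Hg2]).
exists s. split; [exact Hs |].
set (P := exp (g2 * s)).
assert (HP : K < P).
{ unfold P, s. replace (g2 * ((Rabs K + 1) / g2)) with (Rabs K + 1) by (field; lra).
  generalize (exp_ineq1_le (Rabs K + 1)) (Rle_abs K). lra. }
apply (Rplus_lt_reg_r m). unfold m. rewrite fit_coef_add. fold m.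
assert (HY : 0 < exp (- g1 * s) <= 1)
  by (split; [apply exp_pos | rewrite <- exp_0; apply exp_le; nra]).
assert (HB : c * P <= fit_basis g1 g2 s) by (unfold fit_basis; fold c P; lra).
assert (HcP : 0 < c * P) by (apply Rmult_lt_0_compat; [exact Hc | apply exp_pos]).
apply Rle_lt_trans with ((a + m) / (c * P)).
- unfold Rdiv. apply Rmult_le_compat; [nra | left; apply Rinv_0_lt_compat, fit_basis_pos | nra |].
  apply Rinv_le_contravar; assumption.
- assert (Hym : 0 < y + m) by lra. assert (Ham : 0 < a + m) by lra.
  assert (HK : 0 < K) by (unfold K; apply Rdiv_lt_0_compat; nra).
  replace (y + m) with ((a + m) / (c * K))
    by (unfold K; field; repeat split; apply Rgt_not_eq; assumption).
  apply Rmult_lt_compat_l; [lra |]. apply Rinv_lt_contravar.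
  + apply Rmult_lt_0_compat; [apply Rmult_lt_0_compat |]; assumption.
  + apply Rmult_lt_compat_l; assumption.
Qed.

Lemma expsum_fit_slope_nonpos G t z : z <= t -> - (beta / g1) <= (1 + g1 / g2) * G ->
  beta + expsum 0 (G * g1) g1 ((g1 / g2 * G + beta / g2) * - g2) (- g2) t z <= 0.
Proof.
intros Hz HG. unfold expsum.
set (e1 := exp (g1 * (z - t))). set (e2 := exp (- g2 * (z - t))).
assert (He1 : 1 + g1 * (z - t) <= e1 <= 1)
  by (split; [apply exp_ineq1_le | unfold e1; rewrite <- exp_0; apply exp_le; nra]).
assert (He2 : 1 + - g2 * (z - t) <= e2) by apply exp_ineq1_le.
assert (HGm : - (beta * g2) <= (g1 + g2) * (g1 * G)).
{ apply (Rmult_le_compat_l (g1 * g2)) in HG; [| nra].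
  replace (g1 * g2 * - (beta / g1)) with (- (beta * g2)) in HG by (field; lra).
  replace (g1 * g2 * ((1 + g1 / g2) * G)) with ((g1 + g2) * (g1 * G)) in HG by (field; lra).
  exact HG. }
assert (Hsum : g1 * (1 - e2) + g2 * (1 - e1) <= 0) by nra.
apply (Rmult_le_reg_l (g1 + g2)); [lra |].
replace ((g1 + g2) * (beta + (0 + G * g1 * e1 + (g1 / g2 * G + beta / g2) * - g2 * e2)))
  with (beta * (g1 * (1 - e2) + g2 * (1 - e1)) + (beta * g2 + (g1 + g2) * (g1 * G)) * (e1 - e2))
  by (field; lra).
assert (He12 : e1 - e2 <= 0) by nra.
assert (beta * (g1 * (1 - e2) + g2 * (1 - e1)) <= 0) by nra.
assert ((beta * g2 + (g1 + g2) * (g1 * G)) * (e1 - e2) <= 0) by nra.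
lra.
Qed.
End FitCoef.

Section SmoothFit.
Variables (mu sigma u0 r beta d : R).
Hypotheses (Hsigma : 0 < sigma) (Hu0 : 0 < u0) (Hr : 0 < r) (Hbeta : 0 < beta).

Local Notation g1 := (theta1 mu sigma r 0).
Local Notation g2 := (theta2 mu sigma r 0).
Local Notation a1 := (theta1 mu sigma r u0).
Local Notation a2 := (theta2 mu sigma r u0).
Local Notation xi := (xi2 mu sigma u0 r beta).
Local Notation G C t := (fit_coef g1 g2 beta (C + / r) (t - d)).

Let g1_pos : 0 < g1 := theta1_pos mu sigma r 0 Hsigma Hr.
Let g2_pos : 0 < g2 := theta2_pos mu sigma r 0 Hsigma Hr.
Let a1_pos : 0 < a1 := theta1_pos mu sigma r u0 Hsigma Hr.
Let a2_pos : 0 < a2 := theta2_pos mu sigma r u0 Hsigma Hr.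

Lemma Hfun_expsum C t z :
  Hfun mu sigma r beta d C t z
  = expsum (- / r) (G C t) g1 (g1 / g2 * G C t + beta / g2) (- g2) t z.
Proof.
unfold Hfun, expsum, fit_coef, fit_basis. cbv zeta.
assert (Hden : exp (g1 * d) + g1 / g2 * exp ((g1 + g2) * t) * exp (- g2 * d)
  = (exp (- g1 * (t - d)) + g1 / g2 * exp (g2 * (t - d))) * exp (g1 * t)).
{ replace (g1 / g2 * exp ((g1 + g2) * t) * exp (- g2 * d))
    with (g1 / g2 * (exp (g2 * (t - d)) * exp (g1 * t)))
    by (rewrite Rmult_assoc, <- !exp_plus; do 2 f_equal; ring).
  replace (exp (g1 * d)) with (exp (- g1 * (t - d)) * exp (g1 * t))
    by (rewrite <- exp_plus; f_equal; ring).
  ring. }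
rewrite Hden.
replace (exp (g1 * z)) with (exp (g1 * (z - t)) * exp (g1 * t))
  by (rewrite <- exp_plus; f_equal; ring).
replace (g1 / g2 * exp ((g1 + g2) * t) * exp (- g2 * z))
  with (g1 / g2 * (exp (- g2 * (z - t)) * exp (g1 * t)))
  by (rewrite Rmult_assoc, <- !exp_plus; do 2 f_equal; ring).
replace (- g2 * (d - t)) with (g2 * (t - d)) by ring.
generalize (exp_pos (- g1 * (t - d))) (exp_pos (g2 * (t - d))) (exp_pos (g1 * t)). intros.
field. repeat split; apply Rgt_not_eq; try assumption. nra.
Qed.

Lemma Kfun_expsum t z :
  Kfun mu sigma u0 r beta t z = expsum ((beta * u0 - 1) / r) (beta / a2) (- a2) 0 (- a2) t z.
Proof. unfold Kfun, expsum. ring. Qed.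

Lemma Hfun_at_d C t : Hfun mu sigma r beta d C t d = C.
Proof.
unfold Hfun. cbv zeta.
generalize (exp_pos (g1 * d)) (exp_pos ((g1 + g2) * t)) (exp_pos (- g2 * d)). intros.
assert (0 < g1 / g2) by (apply Rdiv_lt_0_compat; assumption).
assert (0 < g1 / g2 * exp ((g1 + g2) * t) * exp (- g2 * d))
  by (apply Rmult_lt_0_compat; [apply Rmult_lt_0_compat |]; assumption).
assert (Hcancel : forall x y, 0 < y -> x / y * y = x) by (intros; field; lra).
rewrite Hcancel by lra. ring.
Qed.

Lemma xi2_add_eq : xi + / r - beta / g2 + beta / g1 = beta / a1.
Proof.
assert (E0 := inv_theta1_sub_inv_theta2 mu sigma r 0 Hsigma Hr).
assert (E1 := inv_theta1_sub_inv_theta2 mu sigma r u0 Hsigma Hr).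
unfold xi2, Rdiv at 2 3 4 5.
replace (/ a1) with (/ a2 + - (mu - u0) / r) by lra.
replace (/ g1) with (/ g2 + - (mu - 0) / r) by lra.
field. repeat split; apply Rgt_not_eq; assumption.
Qed.

Definition fit_gap C t := Hfun mu sigma r beta d C t t - Kfun mu sigma u0 r beta t t.

Lemma fit_gap_eq C t : fit_gap C t = (1 + g1 / g2) * G C t - (xi + / r - beta / g2).
Proof.
unfold fit_gap. rewrite Hfun_expsum, Kfun_expsum, !expsum_center. unfold xi2. field. lra.
Qed.

Lemma fit_gap_at_d C : fit_gap C d = C - xi.
Proof. rewrite fit_gap_eq, Rminus_diag, fit_coef_0 by assumption. ring. Qed.

Lemma fit_gap_decreasing C t1 t2 : 0 <= C + / r -> d <= t1 < t2 ->
  fit_gap C t2 < fit_gap C t1.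
Proof.
intros HC Ht. rewrite !fit_gap_eq. apply Rplus_lt_compat_r, Rmult_lt_compat_l.
- assert (0 < g1 / g2) by (apply Rdiv_lt_0_compat; assumption). lra.
- apply fit_coef_decreasing; try assumption. lra.
Qed.

Lemma fit_gap_lt_compat C1 C2 t : C1 < C2 -> fit_gap C1 t < fit_gap C2 t.
Proof.
intros HC. rewrite !fit_gap_eq. apply Rplus_lt_compat_r, Rmult_lt_compat_l.
- assert (0 < g1 / g2) by (apply Rdiv_lt_0_compat; assumption). lra.
- apply fit_coef_lt_compat; try assumption. lra.
Qed.

Lemma fit_gap_root_unique C t1 t2 : 0 <= C + / r -> d <= t1 -> d <= t2 ->
  fit_gap C t1 = 0 -> fit_gap C t2 = 0 -> t1 = t2.
Proof.
intros HC H1 H2 E1 E2.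
destruct (Rtotal_order t1 t2) as [Ht | [Ht | Ht]]; [| exact Ht |].
- assert (HH := fit_gap_decreasing C t1 t2 HC (conj H1 Ht)). lra.
- assert (HH := fit_gap_decreasing C t2 t1 HC (conj H2 Ht)). lra.
Qed.

Lemma fit_gap_root_lt C1 C2 z1 z2 : 0 <= C2 + / r -> d <= z2 -> C1 < C2 ->
  fit_gap C1 z1 = 0 -> fit_gap C2 z2 = 0 -> z1 < z2.
Proof.
intros HC Hz2 H12 E1 E2. destruct (Rlt_le_dec z1 z2) as [Hz | Hz]; [exact Hz | exfalso].
assert (HC12 := fit_gap_lt_compat C1 C2 z1 H12).
assert (fit_gap C2 z1 <= fit_gap C2 z2).
{ destruct Hz as [Hz | ->]; [left; apply fit_gap_decreasing; lra | right; reflexivity]. }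
lra.
Qed.

Lemma fit_gap_eventually_neg C : 0 <= C + / r -> exists T, d < T /\ fit_gap C T < 0.
Proof.
intros HC. set (Q := xi + / r - beta / g2).
assert (Hk : 0 < 1 + g1 / g2)
  by (assert (0 < g1 / g2) by (apply Rdiv_lt_0_compat; assumption); lra).
assert (HQ : - (beta / g1) < Q / (1 + g1 / g2)).
{ apply (Rmult_lt_reg_l (1 + g1 / g2)); [exact Hk |].
  replace ((1 + g1 / g2) * (Q / (1 + g1 / g2))) with Q by (field; lra).
  replace ((1 + g1 / g2) * - (beta / g1)) with (- (beta / g1) - beta / g2) by (field; lra).
  assert (HQa : Q + beta / g1 = beta / a1) by apply xi2_add_eq.
  assert (0 < beta / a1) by (apply Rdiv_lt_0_compat; assumption).
  assert (0 < beta / g2) by (apply Rdiv_lt_0_compat; assumption).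
  lra. }
destruct (fit_coef_eventually_lt g1 g2 beta g1_pos g2_pos Hbeta (C + / r) _ HC HQ)
  as [s [Hs HsQ]].
exists (d + s). split; [lra |].
rewrite fit_gap_eq. replace (d + s - d) with s by ring. fold Q.
apply (Rmult_lt_compat_l (1 + g1 / g2)) in HsQ; [| exact Hk].
replace ((1 + g1 / g2) * (Q / (1 + g1 / g2))) with Q in HsQ by (field; lra).
lra.
Qed.

Lemma continuous_fit_gap C t : continuous (fit_gap C) t.
Proof.
apply (continuous_ext (fun t => (1 + g1 / g2) * G C t - (xi + / r - beta / g2)));
  [intros; symmetry; apply fit_gap_eq |].
apply (continuous_minus (fun t => _ * _) (fun _ => _)); [| apply continuous_const].
apply (continuous_scal_r (K := R_AbsRing) (V := R_NormedModule)).
apply (continuous_comp (fun t => t - d)).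
- apply (continuous_minus (fun t => t) (fun _ => d));
    [apply continuous_id | apply continuous_const].
- apply continuous_fit_coef; assumption.
Qed.

Lemma fit_gap_root_exists C : 0 <= C + / r -> xi < C -> exists z, d < z /\ fit_gap C z = 0.
Proof.
intros HC Hxi. destruct (fit_gap_eventually_neg C HC) as [T [HT HgT]].
assert (Hgd : 0 < fit_gap C d) by (rewrite fit_gap_at_d; lra).
destruct (IVT_gen (fit_gap C) d T 0) as [z [Hz Hgz]].
- intros t. apply continuity_pt_filterlim, continuous_fit_gap.
- rewrite Rmin_right, Rmax_left by lra. lra.
- rewrite Rmin_left, Rmax_right in Hz by lra.
  exists z. split; [| exact Hgz].
  destruct (proj1 Hz) as [Hzd | <-]; [exact Hzd | lra].
Qed.

Lemma gC_at_d C z : d <= z -> gC mu sigma u0 r beta d C z d = C.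
Proof. intros Hz. unfold gC. destruct (Rle_dec d z); [apply Hfun_at_d | lra]. Qed.

Lemma fit_gap_of_Problem2 C z : d <= z ->
  Problem2 mu sigma u0 r beta d (gC mu sigma u0 r beta d C z) -> fit_gap C z = 0.
Proof.
intros Hz [_ [g' [_ [Hg' _]]]].
assert (HK : continuous (Kfun mu sigma u0 r beta z) z).
{ eapply continuous_ext; [intros y; symmetry; apply Kfun_expsum | apply continuous_expsum]. }
assert (E := is_deriv_half_eq_right_cont d _ g' _ z Hz Hg' HK).
unfold fit_gap. rewrite <- E.
- unfold gC. destruct (Rle_dec z z); [ring | lra].
- intros h Hh. unfold gC. destruct (Rle_dec (z + h) z); [lra | reflexivity].
Qed.

Definition Hfun' C t := expsum 0 (G C t * g1) g1 ((g1 / g2 * G C t + beta / g2) * - g2) (- g2) t.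
Definition Hfun'' C t :=
  expsum 0 (G C t * g1 * g1) g1 ((g1 / g2 * G C t + beta / g2) * - g2 * - g2) (- g2) t.
Definition Kfun' t := expsum 0 (beta / a2 * - a2) (- a2) (0 * - a2) (- a2) t.
Definition Kfun'' t := expsum 0 (beta / a2 * - a2 * - a2) (- a2) (0 * - a2 * - a2) (- a2) t.

Lemma is_derive_Hfun C t z : is_derive (Hfun mu sigma r beta d C t) z (Hfun' C t z).
Proof.
apply (is_derive_ext (expsum (- / r) (G C t) g1 (g1 / g2 * G C t + beta / g2) (- g2) t)).
- intros y. symmetry. apply Hfun_expsum.
- apply is_derive_expsum.
Qed.

Lemma is_derive_Kfun t z : is_derive (Kfun mu sigma u0 r beta t) z (Kfun' t z).
Proof.
apply (is_derive_ext (expsum ((beta * u0 - 1) / r) (beta / a2) (- a2) 0 (- a2) t)).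
- intros y. symmetry. apply Kfun_expsum.
- apply is_derive_expsum.
Qed.

Lemma Hfun_ode C t z :
  - r * Hfun mu sigma r beta d C t z - mu * Hfun' C t z + sigma ^ 2 / 2 * Hfun'' C t z = 1.
Proof.
rewrite Hfun_expsum. unfold Hfun', Hfun''. rewrite (expsum_ode (sigma ^ 2) mu r).
- field. lra.
- generalize (theta1_char mu sigma r 0 Hsigma Hr). rewrite Rminus_0_r. lra.
- generalize (theta2_char mu sigma r 0 Hsigma Hr). rewrite Rminus_0_r. lra.
Qed.

Lemma Kfun_ode t z :
  - r * Kfun mu sigma u0 r beta t z - (mu - u0) * Kfun' t z + sigma ^ 2 / 2 * Kfun'' t z
  = 1 - beta * u0.
Proof.
rewrite Kfun_expsum. unfold Kfun', Kfun''. rewrite (expsum_ode (sigma ^ 2) (mu - u0) r).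
- field. lra.
- apply theta2_char; assumption.
- apply theta2_char; assumption.
Qed.

Lemma Hfun'_at_t C t : Hfun' C t t = - beta.
Proof. unfold Hfun'. rewrite expsum_center. field. lra. Qed.

Lemma Kfun'_at_t t : Kfun' t t = - beta.
Proof. unfold Kfun'. rewrite expsum_center. field. lra. Qed.

Lemma Hfun''_at_root C z : fit_gap C z = 0 -> Hfun'' C z z = Kfun'' z z.
Proof.
intros Hgap. unfold fit_gap in Hgap.
assert (EH := Hfun_ode C z z). assert (EK := Kfun_ode z z).
rewrite Hfun'_at_t in EH. rewrite Kfun'_at_t in EK.
apply (Rmult_eq_reg_l (sigma ^ 2 / 2)); [| generalize (pow_lt sigma 2 Hsigma); lra].
replace (Kfun mu sigma u0 r beta z z) with (Hfun mu sigma r beta d C z z) in EK by lra.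
nra.
Qed.

Lemma Hfun_hjb C z y : fit_gap C z = 0 -> y <= z ->
  - r * Hfun mu sigma r beta d C z y - mu * Hfun' C z y + sigma ^ 2 / 2 * Hfun'' C z y
  + sup_ctrl u0 beta (Hfun' C z y) = 1.
Proof.
intros Hgap Hy.
assert (Hfit : - (beta / g1) <= (1 + g1 / g2) * G C z).
{ assert (E := fit_gap_eq C z). assert (Hxi := xi2_add_eq).
  assert (0 < beta / a1) by (apply Rdiv_lt_0_compat; assumption). lra. }
assert (Hneg := expsum_fit_slope_nonpos g1 g2 beta g1_pos g2_pos Hbeta (G C z) z y Hy Hfit).
fold (Hfun' C z y) in Hneg.
assert (Hsup : sup_ctrl u0 beta (Hfun' C z y) = 0)
  by (rewrite sup_ctrl_eq by lra; apply Rmax_left; nra).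
rewrite Hsup, Rplus_0_r. apply Hfun_ode.
Qed.

Lemma Kfun_hjb z y : z <= y ->
  - r * Kfun mu sigma u0 r beta z y - mu * Kfun' z y + sigma ^ 2 / 2 * Kfun'' z y
  + sup_ctrl u0 beta (Kfun' z y) = 1.
Proof.
intros Hy.
assert (Hpos : 0 <= beta + Kfun' z y).
{ unfold Kfun', expsum. assert (exp (- a2 * (y - z)) <= 1) by (rewrite <- exp_0; apply exp_le; nra).
  replace (beta / a2 * - a2) with (- beta) by (field; lra). nra. }
assert (Hsup : sup_ctrl u0 beta (Kfun' z y) = (beta + Kfun' z y) * u0)
  by (rewrite sup_ctrl_eq by lra; apply Rmax_right; nra).
rewrite Hsup. generalize (Kfun_ode z y). lra.
Qed.

Lemma gC_bounded C z : exists M, forall y, d <= y -> Rabs (gC mu sigma u0 r beta d C z y) <= M.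
Proof.
set (A := G C z). set (B := g1 / g2 * A + beta / g2).
exists (Rabs (- / r) + Rabs A + Rabs B * exp (g2 * (z - d))
        + (Rabs ((beta * u0 - 1) / r) + Rabs (beta / a2))).
intros y Hy. generalize (Rabs_pos (- / r)) (Rabs_pos A) (Rabs_pos B)
  (Rabs_pos ((beta * u0 - 1) / r)) (Rabs_pos (beta / a2)) (exp_pos (g2 * (z - d))). intros.
unfold gC. destruct (Rle_dec y z) as [Hyz | Hyz].
- rewrite Hfun_expsum. eapply Rle_trans; [apply expsum_abs_le |]. fold A B.
  assert (exp (g1 * (y - z)) <= 1) by (rewrite <- exp_0; apply exp_le; nra).
  assert (exp (- g2 * (y - z)) <= exp (g2 * (z - d))) by (apply exp_le; nra).
  nra.
- rewrite Kfun_expsum. eapply Rle_trans; [apply expsum_abs_le |].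
  assert (exp (- a2 * (y - z)) <= 1) by (rewrite <- exp_0; apply exp_le; nra).
  rewrite Rabs_R0, Rmult_0_l. nra.
Qed.

Lemma Problem2_of_fit_gap C z : fit_gap C z = 0 ->
  Problem2 mu sigma u0 r beta d (gC mu sigma u0 r beta d C z).
Proof.
intros Hgap.
change (gC mu sigma u0 r beta d C z)
  with (extension_cont (Hfun mu sigma r beta d C z) (Kfun mu sigma u0 r beta z) z).
apply Problem2_extension_cont with (H1 := Hfun' C z) (H2 := Hfun'' C z)
                                   (K1 := Kfun' z) (K2 := Kfun'' z).
- apply is_derive_Hfun.
- intros y. apply is_derive_expsum.
- intros y. apply continuous_expsum.
- apply is_derive_Kfun.
- intros y. apply is_derive_expsum.
- intros y. apply continuous_expsum.
- unfold fit_gap in Hgap. lra.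
- rewrite Hfun'_at_t, Kfun'_at_t. reflexivity.
- apply Hfun''_at_root. exact Hgap.
- intros y Hy. apply Hfun_hjb; [exact Hgap | lra].
- intros y Hy. apply Kfun_hjb. lra.
- apply gC_bounded.
Qed.

End SmoothFit.

Theorem proposition4p6 (mu sigma u0 r beta d : R)
  (Hsigma : 0 < sigma) (Hu0 : 0 < u0) (Hr : 0 < r) (Hbeta : 0 < beta) (Hd : 0 < d) :
  (* existence and uniqueness of z_g^C *)
  (forall C, (beta * u0 - 1) / r < C -> C < beta * u0 / r ->
     xi2 mu sigma u0 r beta < C ->
     exists! z, d < z /\
       Problem2 mu sigma u0 r beta d (gC mu sigma u0 r beta d C z) /\
       gC mu sigma u0 r beta d C z d = C)
  /\
  (* C |-> z_g^C is increasing *)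
  (forall C1 C2 z1 z2,
     (beta * u0 - 1) / r < C1 -> C1 < beta * u0 / r -> xi2 mu sigma u0 r beta < C1 ->
     (beta * u0 - 1) / r < C2 -> C2 < beta * u0 / r -> xi2 mu sigma u0 r beta < C2 ->
     d < z1 -> Problem2 mu sigma u0 r beta d (gC mu sigma u0 r beta d C1 z1) ->
     gC mu sigma u0 r beta d C1 z1 d = C1 ->
     d < z2 -> Problem2 mu sigma u0 r beta d (gC mu sigma u0 r beta d C2 z2) ->
     gC mu sigma u0 r beta d C2 z2 d = C2 ->
     C1 < C2 -> z1 < z2)
  /\
  (* z_g^{xi_2(beta)} = d : d is the unique t >= d with H_{xi2,t}(t) = K_t(t) *)
  (forall t, d <= t ->
     (Hfun mu sigma r beta d (xi2 mu sigma u0 r beta) t t = Kfun mu sigma u0 r beta t t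
      <-> t = d)).
Proof.
assert (Ha : forall C, (beta * u0 - 1) / r < C -> 0 <= C + / r).
{ intros C HC. assert (0 < beta * u0 / r) by (apply Rdiv_lt_0_compat; nra).
  replace ((beta * u0 - 1) / r) with (beta * u0 / r - / r) in HC by (field; lra). lra. }
split; [| split].
- intros C HC _ Hxi.
  destruct (fit_gap_root_exists mu sigma u0 r beta d Hsigma Hr Hbeta C (Ha C HC) Hxi)
    as [z [Hz Hgap]].
  exists z. split.
  + split; [exact Hz | split].
    * apply Problem2_of_fit_gap; assumption.
    * apply gC_at_d; [assumption | assumption | lra].
  + intros z' [Hz' [HP' _]].
    apply (fit_gap_root_unique mu sigma u0 r beta d Hsigma Hr Hbeta C);
      [apply Ha; exact HC | lra | lra | exact Hgap |].
    apply fit_gap_of_Problem2; [lra | exact HP'].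
- intros C1 C2 z1 z2 _ _ _ HC2 _ _ Hz1 HP1 _ Hz2 HP2 _ H12.
  apply (fit_gap_root_lt mu sigma u0 r beta d Hsigma Hr Hbeta C1 C2);
    [apply Ha; exact HC2 | lra | exact H12
    | apply fit_gap_of_Problem2; [lra | exact HP1]
    | apply fit_gap_of_Problem2; [lra | exact HP2]].
- intros t Ht.
  assert (Hxi : 0 <= xi2 mu sigma u0 r beta + / r).
  { apply Ha. unfold xi2. assert (0 < beta / theta2 mu sigma r u0)
      by (apply Rdiv_lt_0_compat; [| apply theta2_pos]; assumption). lra. }
  assert (E0 := fit_gap_at_d mu sigma u0 r beta d Hsigma Hr (xi2 mu sigma u0 r beta)).
  unfold fit_gap in E0. split.
  + intros E. apply (fit_gap_root_unique mu sigma u0 r beta d Hsigma Hr Hbeta _ t d Hxi);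
      unfold fit_gap; lra.
  + intros ->. lra.
Qed.
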